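(* Let $X$ be a diffeological space and $E$ a complex vector bundle over $X$ with a local algebra structure such that for every $x\in X$ the algebra $E|_x$ is simple. Then $E$ is an algebra bundle.
   Context: Algebras are complex, associative, unital, finite-dimensional. A complex vector bundle of rank $k$ over a diffeological space $X$ is a diffeological space $E$ with smooth $\pi:E\to X$ and a complex vector space structure on each fiber, such that for every plot $c:U\to X$ ($U$ open in some $\mathbb{R}^n$) and $u\in U$ there are an open $u\in W\subset U$ and a diffeomorphism $W\times\mathbb{C}^k\to W\times_XE$ covering $\mathrm{id}_W$ and fiberwise linear. An algebra structure on $E$ is a bundle morphism $\mu:E\otimes E\to E$ making each fiber an algebra such that the section of units is smooth. It is local if for every plot $c:U\to X$ and $x\in U$ there are an algebra $A_{c,x}$, an open $x\in V\subset U$ and a diffeomorphism $V\times A_{c,x}\to V\times_XE$ covering $\mathrm{id}_V$ that restricts to algebra isomorphisms on each fiber. $E$ is an algebra bundle if the algebras $A_{c,x}$ can be chosen independently of $c$ and $x$. *)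

From HB Require Import structures.
From mathcomp Require Import all_boot all_order all_algebra.
From mathcomp Require Import all_classical all_reals all_analysis.
From mathcomp Require Import complex falgebra.
From mathcomp Require Import Rstruct Rstruct_topology.
Import GRing.Theory Num.Theory.

Set Implicit Arguments.
Unset Strict Implicit.
Unset Printing Implicit Defensive.

Local Open Scope ring_scope.
Local Open Scope classical_set_scope.

Notation RR := Rdefinitions.R.
Notation CC := (RR[i]).

Fixpoint Ck (n : nat) (k : nat) (U : set 'rV[RR]_n) (f : 'rV[RR]_n -> RR) : Prop :=
  match k with
  | 0 => forall x, U x -> {for x, continuous (f : 'rV[RR]_n -> RR^o)}
  | k'.+1 => (forall x, U x -> differentiable (f : 'rV[RR]_n -> RR^o) x) /\
             forall v : 'rV[RR]_n, Ck k' U ('D_v (f : 'rV[RR]_n -> RR^o))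
  end.

Definition smoothR (n : nat) (U : set 'rV[RR]_n) (f : 'rV[RR]_n -> RR) : Prop :=
  forall k, Ck k U f.

Definition smooth_map (n m : nat) (U : set 'rV[RR]_n) (f : 'rV[RR]_n -> 'rV[RR]_m) : Prop :=
  forall j : 'I_m, smoothR U (fun x => f x ord0 j).

Record diffeology (X : Type) := Diffeology {
  plot : forall n : nat, set 'rV[RR]_n -> ('rV[RR]_n -> X) -> Prop;
  plot_open : forall n (U : set 'rV[RR]_n) c, plot U c -> open U;
  plot_ext : forall n (U : set 'rV[RR]_n) (c c' : 'rV[RR]_n -> X),
      (forall u, U u -> c u = c' u) -> plot U c -> plot U c';
  plot_const : forall n (U : set 'rV[RR]_n) (x : X), open U -> plot U (fun _ => x);
  plot_local : forall n (U : set 'rV[RR]_n) (c : 'rV[RR]_n -> X), open U ->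
      (forall u, U u -> exists W : set 'rV[RR]_n, [/\ open W, W u, W `<=` U & plot W c]) ->
      plot U c;
  plot_comp : forall n m (U : set 'rV[RR]_n) (V : set 'rV[RR]_m)
      (c : 'rV[RR]_n -> X) (f : 'rV[RR]_m -> 'rV[RR]_n),
      plot U c -> open V -> smooth_map V f -> (forall v, V v -> U (f v)) ->
      plot V (c \o f)
}.
Arguments plot {X} d {n}.

Definition dsmooth (X Y : Type) (DX : diffeology X) (DY : diffeology Y) (f : X -> Y) : Prop :=
  forall n (U : set 'rV[RR]_n) (c : 'rV[RR]_n -> X), plot DX U c -> plot DY U (f \o c).

Definition csmooth (n : nat) (U : set 'rV[RR]_n) (g : 'rV[RR]_n -> CC) : Prop :=
  smoothR U (fun u => complex.Re (g u)) /\ smoothR U (fun u => complex.Im (g u)).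

(* plots of C^k = R^{2k} *)
Definition plotCk (k : nat) (n : nat) (U : set 'rV[RR]_n) (q : 'rV[RR]_n -> 'rV[CC]_k) : Prop :=
  open U /\ forall j : 'I_k, csmooth U (fun u => q u ord0 j).

(* plots of a finite-dimensional complex algebra A (standard diffeology of a
   finite-dimensional vector space: coordinates in a basis are smooth) *)
Definition plotA (A : falgType CC) (n : nat) (U : set 'rV[RR]_n) (q : 'rV[RR]_n -> A) : Prop :=
  open U /\ forall i, csmooth U (fun u => coord (vbasis (fullv : {vspace A})) i (q u)).

(* The total space E is represented as the dependent sum {x : X & Efib x}, with
   projection projT1.  [triv_over DE plotF good c W Phi] says that
   (w, v) |-> Phi w v is a diffeomorphism  W x F -> W x_X E  covering id_W
   (for the plot c of X) whose fiber maps satisfy [good]. *)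
Definition triv_over (X : Type) (Efib : X -> Type) (DE : diffeology {x : X & Efib x})
  (F : Type) (plotF : forall m, set 'rV[RR]_m -> ('rV[RR]_m -> F) -> Prop)
  (good : forall x, (F -> Efib x) -> Prop)
  (n : nat) (c : 'rV[RR]_n -> X) (W : set 'rV[RR]_n) (Phi : forall w, F -> Efib (c w)) : Prop :=
  [/\ forall w, W w -> good (c w) (Phi w),
      (* Phi : W x F -> W x_X E is smooth *)
      forall m (U : set 'rV[RR]_m) (p : 'rV[RR]_m -> 'rV[RR]_n) (q : 'rV[RR]_m -> F),
        open U -> smooth_map U p -> (forall u, U u -> W (p u)) -> plotF m U q ->
        plot DE U (fun u => existT Efib (c (p u)) (Phi (p u) (q u)))
    & (* its inverse W x_X E -> W x F is smooth *)
      forall m (U : set 'rV[RR]_m) (p : 'rV[RR]_m -> 'rV[RR]_n) (b : 'rV[RR]_m -> {x : X & Efib x}),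
        open U -> smooth_map U p -> (forall u, U u -> W (p u)) -> plot DE U b ->
        (forall u, U u -> c (p u) = projT1 (b u)) ->
        exists q : 'rV[RR]_m -> F, plotF m U q /\
          forall u, U u -> existT Efib (c (p u)) (Phi (p u) (q u)) = b u ].
Arguments triv_over {X Efib} DE {F} plotF good {n} c W Phi.

Definition vector_bundle (X : Type) (DX : diffeology X) (Efib : X -> lmodType CC)
  (DE : diffeology {x : X & Efib x}) (k : nat) : Prop :=
  dsmooth DE DX (@projT1 X Efib) /\
  forall n (U : set 'rV[RR]_n) (c : 'rV[RR]_n -> X), plot DX U c ->
  forall u, U u ->
  exists (W : set 'rV[RR]_n) (Phi : forall w, 'rV[CC]_k -> Efib (c w)),
    [/\ open W, W u, W `<=` U &
        triv_over DE (@plotCk k) (fun x (f : 'rV[CC]_k -> Efib x) => linear f /\ bijective f)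
                  c W Phi].

(* algebra structure: the fibers are algebras (with the given linear structure),
   multiplication E x_X E -> E is smooth and the unit section is smooth *)
Definition algebra_structure (X : Type) (DX : diffeology X) (Efib : X -> algType CC)
  (DE : diffeology {x : X & Efib x}) : Prop :=
  (forall n (U : set 'rV[RR]_n) (a : 'rV[RR]_n -> X) (e1 e2 : forall u, Efib (a u)),
      plot DE U (fun u => existT Efib (a u) (e1 u)) ->
      plot DE U (fun u => existT Efib (a u) (e2 u)) ->
      plot DE U (fun u => existT Efib (a u) (e1 u * e2 u))) /\
  dsmooth DX DE (fun x => existT Efib x 1).

Definition alg_iso (A : falgType CC) (B : algType CC) (f : A -> B) : Prop :=
  [/\ linear f, bijective f, (forall a b, f (a * b) = f a * f b) & f 1 = 1].

Definition local_algebra_structure (X : Type) (DX : diffeology X) (Efib : X -> algType CC)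
  (DE : diffeology {x : X & Efib x}) : Prop :=
  algebra_structure DX DE /\
  forall n (U : set 'rV[RR]_n) (c : 'rV[RR]_n -> X), plot DX U c ->
  forall x, U x ->
  exists (A : falgType CC) (V : set 'rV[RR]_n) (Phi : forall w, A -> Efib (c w)),
    [/\ open V, V x, V `<=` U &
        triv_over DE (@plotA A) (fun y (f : A -> Efib y) => alg_iso f) c V Phi].

Definition algebra_bundle (X : Type) (DX : diffeology X) (Efib : X -> algType CC)
  (DE : diffeology {x : X & Efib x}) : Prop :=
  algebra_structure DX DE /\
  exists A : falgType CC,
  forall n (U : set 'rV[RR]_n) (c : 'rV[RR]_n -> X), plot DX U c ->
  forall x, U x ->
  exists (V : set 'rV[RR]_n) (Phi : forall w, A -> Efib (c w)),
    [/\ open V, V x, V `<=` U &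
        triv_over DE (@plotA A) (fun y (f : A -> Efib y) => alg_iso f) c V Phi].

Definition two_sided_ideal (B : algType CC) (I : set B) : Prop :=
  [/\ I 0, (forall x y, I x -> I y -> I (x - y)),
      (forall a x, I x -> I (a * x)) & (forall a x, I x -> I (x * a))].

Definition simple_algebra (B : algType CC) : Prop :=
  (1 : B) != 0 /\
  forall I : set B, two_sided_ideal I -> I = [set 0] \/ I = setT.

(* Every fibre E_x is a simple algebra and, being linearly isomorphic to C^k,
   has dimension k.  Over the algebraically closed field C a simple algebra is
   isomorphic to a full matrix algebra M_m(C) (Wedderburn), and m^2 = k fixes m,
   so any two model algebras A_{c,x} are isomorphic.  Precomposing every local
   trivialization with an algebra isomorphism from one fixed model A_0 gives
   trivializations with model A_0; smoothness survives since linear maps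
   between finite-dimensional algebras send plots to plots.

   Wedderburn's theorem goes through a minimal left ideal L.  By simplicity A
   acts faithfully on L; right multiplication by an element of L acts on L by
   a scalar (Schur), which produces a right unit e of L with e A e = C e.  The
   functional mu with e y e = mu y e pairs A with L nondegenerately, and this
   makes the left action A -> End(L) onto. *)

From HB Require Import structures.
From mathcomp Require Import all_boot all_order all_algebra.
From mathcomp Require Import all_classical all_reals all_analysis.
From mathcomp Require Import complex falgebra.
From mathcomp Require Import Rstruct Rstruct_topology ring.
Import Order.TTheory GRing.Theory Num.Theory.
Set Implicit Arguments.
Unset Strict Implicit.
Unset Printing Implicit Defensive.

Local Open Scope ring_scope.
Local Open Scope classical_set_scope.

Definition linear_of (R : pzRingType) (U V : lmodType R) (f : U -> V)
  (lf : linear f) : {linear U -> V} :=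
  HB.pack f (GRing.isLinear.Build R U V *:%R f lf).

Lemma linear_inverse (R : pzRingType) (U V : lmodType R) (f : U -> V) (g : V -> U) :
  linear f -> cancel f g -> cancel g f -> linear g.
Proof. by move=> lf fK gK a x y; apply: (canLR fK); rewrite lf !gK. Qed.

Lemma injective_onto_bijective (T S : Type) (f : T -> S) :
  injective f -> (forall s, exists t, f t = s) -> bijective f.
Proof.
move=> finj onto; exists (fun s => projT1 (cid (onto s))) => [t|s].
  by apply: finj; case: cid.
by case: cid.
Qed.

Lemma dim_linear_bij (K : fieldType) (U V : vectType K) (f : U -> V) :
  linear f -> bijective f -> dim U = dim V.
Proof.
move=> lf [g fK gK]; pose h := linfun (linear_of lf).
have hE x : h x = f x by rewrite lfunE.
have ker0 : (fullv :&: lker h)%VS = 0%VS.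
  by rewrite capfv; apply/eqP/lker0P => x y; rewrite !hE => /(can_inj fK).
have img_full : (h @: fullv)%VS = fullv.
  apply/eqP; rewrite eqEsubv subvf; apply/subvP => v _.
  by rewrite -[v]gK -hE memv_img ?memvf.
by rewrite -!dimvf -img_full limg_dim_eq.
Qed.

Lemma vbasis_nth_mem (K : fieldType) (V : vectType K) (U : {vspace V})
  (i : 'I_(\dim U)) : (vbasis U)`_i \in U.
Proof. by rewrite vbasis_mem ?mem_nth ?size_tuple. Qed.

Lemma vbasis_free (K : fieldType) (V : vectType K) (U : {vspace V}) : free (vbasis U).
Proof. exact: basis_free (vbasisP U). Qed.

Lemma closed_eigenvector (F : closedFieldType) n (M : 'M[F]_n) : (0 < n)%N ->
  exists lam, exists2 v : 'rV_n, v != 0 & v *m M = lam *: v.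
Proof.
move=> n_gt0; have [lam] : exists lam, root (char_poly M) lam.
  by apply/closed_rootP; rewrite size_char_poly -lt0n.
by rewrite -eigenvalue_root_char => /eigenvalueP[v]; exists lam, v.
Qed.

Lemma vspace_eigenvector (F : closedFieldType) (V : vectType F) (U : {vspace V})
    (f : 'End(V)) :
  U != 0%VS -> (f @: U <= U)%VS ->
  exists lam, exists2 u, u \in U /\ u != 0 & f u = lam *: u.
Proof.
move=> U0 fU; pose b := vbasis U.
pose M : 'M[F]_(\dim U) := \matrix_(i, j) coord b j (f b`_i).
have dimU : (0 < \dim U)%N by rewrite lt0n dimv_eq0.
have [lam [v v0 vM]] := closed_eigenvector M dimU.
pose u := \sum_i v 0 i *: b`_i.
exists lam, u; last first.
  transitivity (\sum_j (v *m M) 0 j *: b`_j); last first.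
    by rewrite vM /u scaler_sumr; apply: eq_bigr => j _; rewrite mxE scalerA.
  rewrite linear_sum /=.
  have fbU (i : 'I_(\dim U)) : f b`_i \in U := subvP fU _ (memv_img f (vbasis_nth_mem i)).
  under eq_bigr => i _ do rewrite linearZ /= (coord_vbasis (fbU i)).
  under [RHS]eq_bigr => j _ do rewrite mxE scaler_suml.
  rewrite exchange_big /=; apply: eq_bigr => i _; rewrite scaler_sumr.
  by apply: eq_bigr => j _; rewrite mxE scalerA.
split; first by apply: memv_suml => i _; apply/memvZ/vbasis_nth_mem.
apply: contraNneq v0 => u0; apply/eqP/rowP => i.
by rewrite mxE; apply: (freeP (vbasis_free U) _ u0).
Qed.

Definition ring_ideal (R : pzRingType) (I : set R) : Prop :=
  [/\ I 0, (forall x y, I x -> I y -> I (x - y)),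
      (forall a x, I x -> I (a * x)) & (forall a x, I x -> I (x * a))].

Definition simple_ring (R : pzRingType) : Prop :=
  forall I : set R, ring_ideal I -> I = [set 0] \/ I = setT.

Lemma simple_ring_iso (R S : pzRingType) (f : R -> S) :
  bijective f -> {morph f : x y / x - y} -> {morph f : x y / x * y} ->
  simple_ring S -> simple_ring R.
Proof.
move=> [g fK gK] fB fM simpleS I [I0 IB IMl IMr].
have f0 : f 0 = 0 by rewrite -(subrr 0) fB subrr.
have Jideal : ring_ideal (f @` I).
  split; first by exists 0.
  - by move=> _ _ [x Ix <-] [y Iy <-]; exists (x - y); rewrite ?fB //; apply: IB.
  - by move=> a _ [x Ix <-]; exists (g a * x); rewrite ?fM ?gK //; apply: IMl.
  - by move=> a _ [x Ix <-]; exists (x * g a); rewrite ?fM ?gK //; apply: IMr.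
case: (simpleS _ Jideal) => [J0|JT]; [left | right]; apply/seteqP; split=> x //=.
- move=> Ix; have : (f @` I) (f x) by exists x.
  by rewrite J0 => /= fx0; apply: (can_inj fK); rewrite fx0 f0.
- by move=> ->.
- move=> _; have : (f @` I) (f x) by rewrite JT.
  by case=> y Iy /(can_inj fK) <-.
Qed.

Section Wedderburn.
Variables (F : closedFieldType) (A : falgType F).
Hypothesis simpleA : simple_ring A.

Definition left_ideal (L : {vspace A}) : Prop := forall a x, x \in L -> a * x \in L.

Lemma left_ideal_faithful L : L != 0%VS -> left_ideal L ->
  forall a, (forall l, l \in L -> a * l = 0) -> a = 0.
Proof.
move=> L0 idealL a aL; pose ann := [set b : A | forall l, l \in L -> b * l = 0].
have annI : ring_ideal ann.
  split=> /=.
  - by move=> l _; rewrite mul0r.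
  - by move=> x y xL yL l lL; rewrite mulrBl xL // yL // subr0.
  - by move=> b x xL l lL; rewrite -mulrA xL // mulr0.
  - by move=> b x xL l lL; rewrite -mulrA xL // idealL.
case: (simpleA annI) => [ann0 | annT].
  by have : ann a by []; rewrite ann0.
have : ann 1 by rewrite annT.
by move=> /(_ _ (memv_pick L)) /eqP; rewrite mul1r vpick0 (negPf L0).
Qed.

Lemma exists_minimal_left_ideal : exists L, [/\ left_ideal L, L != 0%VS &
  forall L', left_ideal L' -> (L' <= L)%VS -> L' != 0%VS -> L' = L].
Proof.
pose P n := `[< exists L, [/\ left_ideal L, L != 0%VS & \dim L = n] >].
have exP : exists n, P n.
  exists (\dim (fullv : {vspace A})); apply/asboolP; exists fullv; split=> //.
    by move=> a x _; rewrite memvf.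
  by rewrite -dimv_eq0 dimvf -lt0n FalgType_proper.
case: (ex_minnP exP) => n /asboolP[L [idealL L0 dimL]] minn.
exists L; split=> // L' idealL' L'L L'0; apply/eqP; rewrite eqEdim L'L dimL.
by apply: minn; apply/asboolP; exists L'.
Qed.

Section MinimalLeftIdeal.
Variable L : {vspace A}.
Hypotheses (idealL : left_ideal L) (L0 : L != 0%VS).
Hypothesis minL : forall L', left_ideal L' -> (L' <= L)%VS -> L' != 0%VS -> L' = L.

Local Notation b := (vbasis L).

Lemma minimal_left_ideal_cyclic z : z \in L -> z != 0 ->
  forall l, l \in L -> exists a, l = a * z.
Proof.
move=> zL z0 l lL.
have Az : (amulr z @: fullv)%VS = L.
  apply: minL.
  - move=> a _ /memv_imgP[u _ ->]; rewrite lfunE /= mulrA.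
    by apply/memv_imgP; exists (a * u); rewrite ?memvf // lfunE.
  - by apply/subvP => _ /memv_imgP[u _ ->]; rewrite lfunE /= idealL.
  - apply: contraNneq z0 => Az0; rewrite -memv0 -Az0.
    by apply/memv_imgP; exists 1; rewrite ?memvf // lfunE /= mul1r.
by move: lL; rewrite -Az => /memv_imgP[a _ ->]; exists a; rewrite lfunE.
Qed.

Lemma minimal_left_ideal_schur t : t \in L ->
  exists lam, forall z, z \in L -> z * t = lam *: z.
Proof.
move=> tL.
have stable : (amulr t @: L <= L)%VS.
  by apply/subvP => _ /memv_imgP[z _ ->]; rewrite lfunE /= idealL.
have [lam [z0 [z0L z0_neq0] z0t]] := vspace_eigenvector L0 stable.
exists lam => z zL; have [a ->] := minimal_left_ideal_cyclic z0L z0_neq0 zL.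
by move: z0t; rewrite lfunE /= -mulrA => ->; rewrite scalerAr.
Qed.

Lemma minimal_left_ideal_right_unit :
  exists e, [/\ e \in L, e != 0 & forall z, z \in L -> z * e = z].
Proof.
have a0 : vpick L != 0 by rewrite vpick0.
have [t tL at0] : exists2 t, t \in L & vpick L * t != 0.
  apply: contra_notP (negP a0) => noT.
  apply/eqP/(left_ideal_faithful L0 idealL) => l lL.
  by apply/eqP/negPn/negP => al0; apply: noT; exists l.
have [lam tlam] := minimal_left_ideal_schur tL.
have lam0 : lam != 0 by apply: contraNneq at0 => lam0; rewrite tlam ?memv_pick // lam0 scale0r.
exists (lam^-1 *: t); split.
- exact: memvZ.
- by rewrite scaler_eq0 invr_eq0 negb_or lam0; apply: contraNneq at0 => ->; rewrite mulr0.
- by move=> z zL; rewrite -scalerAr tlam // scalerA mulVf // scale1r.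
Qed.

Definition left_mul_mx (a : A) : 'M[F]_(\dim L) :=
  \matrix_(i, j) coord b i (a * b`_j).

Lemma left_mul_mx_is_linear : linear left_mul_mx.
Proof.
by move=> c x y; apply/matrixP => i j; rewrite !mxE mulrDl -scalerAl linearP.
Qed.

Lemma left_mul_mxM : {morph left_mul_mx : x y / x * y >-> x *m y}.
Proof.
move=> x y; apply/matrixP => i j; rewrite !mxE -mulrA.
rewrite [y * _](coord_vbasis (idealL y (vbasis_nth_mem j))) mulr_sumr linear_sum.
by apply: eq_bigr => k _; rewrite -scalerAr linearZ !mxE mulrC.
Qed.

Lemma left_mul_mx1 : left_mul_mx 1 = 1%:M.
Proof.
by apply/matrixP => i j; rewrite !mxE mul1r coord_free ?vbasis_free // eq_sym.
Qed.

Lemma left_mul_mx_inj : injective left_mul_mx.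
Proof.
move=> x y xy; apply/eqP; rewrite -subr_eq0; apply/eqP.
apply: (left_ideal_faithful L0 idealL) => l lL.
rewrite (coord_vbasis lL) mulr_sumr big1 // => j _.
rewrite -scalerAr (coord_vbasis (idealL (x - y) (vbasis_nth_mem j))).
rewrite big1 ?scaler0 // => i _.
have /matrixP/(_ i j) := xy; rewrite !mxE => xyij.
by rewrite mulrBl linearB /= xyij subrr scale0r.
Qed.

Section Corner.
Variable e : A.
Hypotheses (eL : e \in L) (e0 : e != 0) (eR : forall z, z \in L -> z * e = z).

Lemma corner_scalar : exists mu : {scalar A}, forall y, e * y * e = mu y *: e.
Proof.
have corner y : exists lam, e * y * e = lam *: e.
  have [lam hlam] := minimal_left_ideal_schur (idealL (e * y) eL).
  by exists lam; rewrite -hlam // !mulrA (eR eL).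
(* A nonzero coordinate of [e] reads off these scalars linearly. *)
have [i0 ei0 | coord0] := pickP (fun i => coord b i e != 0); last first.
  case/eqP: e0; rewrite (coord_vbasis eL) big1 // => i _.
  by move/negbFE/eqP: (coord0 i) => ->; rewrite scale0r.
pose mu y := coord b i0 (e * y * e) / coord b i0 e.
have lin_mu : linear (mu : A -> F^o).
  move=> c x y; rewrite /mu mulrDr mulrDl -scalerAr -scalerAl linearP /=.
  by rewrite mulrDl -[c * _ / _]mulrA.
exists (linear_of lin_mu) => y /=; rewrite /mu; have [lam ->] := corner y.
by rewrite linearZ /= mulfK.
Qed.

Variable mu : {scalar A}.
Hypothesis emue : forall y, e * y * e = mu y *: e.

(* [[set x | e A x = 0]] is a two-sided ideal containing [z] but not [1]. *)
Lemma corner_nondegenerate z : z \in L -> z != 0 -> exists y, mu (y * z) != 0.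
Proof.
move=> zL z0; apply: contra_notP (negP z0) => muz0.
have {}muz0 y : mu (y * z) = 0.
  by apply/eqP/negPn/negP => yz0; apply: muz0; exists y.
pose I := [set x : A | forall y, e * y * x = 0].
have idealI : ring_ideal I.
  split=> /=.
  - by move=> y; rewrite mulr0.
  - by move=> x x' xI x'I y; rewrite mulrBr xI x'I subrr.
  - by move=> a x xI y; rewrite mulrA -(mulrA e) xI.
  - by move=> a x xI y; rewrite mulrA xI mul0r.
have Iz : I z by move=> y; rewrite -(eR zL) mulrA -(mulrA e) emue muz0 scale0r.
case: (simpleA idealI) => [I0 | IT].
  by move: Iz; rewrite I0 => ->.
have I1 : I 1 by rewrite IT.
by move: e0; have := I1 1; rewrite !mulr1 => ->; rewrite eqxx.
Qed.

Lemma corner_pairing_onto (w : 'rV[F]_(\dim L)) :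
  exists y, forall k : 'I_(\dim L), mu (y * b`_k) = w 0 k.
Proof.
pose B := vbasis (fullv : {vspace A}).
pose N : 'M[F]_(\dim (fullv : {vspace A}), \dim L) := \matrix_(r, k) mu (B`_r * b`_k).
(* Row-fullness of [N] is the nondegeneracy of [(y, z) |-> mu (y z)] in [z]. *)
have fullN : row_full N.
  apply: contrapT => /negP notfull.
  have : kermx N^T != 0 by rewrite kermx_eq0 /row_free mxrank_tr.
  case/rowV0Pn => v /sub_kermxP vN v0.
  pose z := \sum_k v 0 k *: b`_k.
  have zL : z \in L by apply: memv_suml => k _; apply/memvZ/vbasis_nth_mem.
  have z0 : z != 0.
    apply: contraNneq v0 => z0; apply/eqP/rowP => k.
    by rewrite mxE; apply: (freeP (vbasis_free L) _ z0).
  have [y] := corner_nondegenerate zL z0; apply/negP; rewrite negbK.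
  rewrite (coord_vbasis (memvf y)) mulr_suml linear_sum big1 // => r _.
  rewrite -scalerAl linearZ /=.
  suff -> : mu (B`_r * z) = 0 by rewrite mulr0.
  have /rowP/(_ r) := vN; rewrite !mxE => <-.
  rewrite mulr_sumr linear_sum; apply: eq_bigr => k _.
  by rewrite -scalerAr linearZ !mxE.
have [C CN] := row_fullP fullN.
exists (\sum_r (w *m C) 0 r *: B`_r) => k.
rewrite mulr_suml linear_sum.
have /rowP/(_ k) : w *m C *m N = w by rewrite -mulmxA CN mulmx1.
rewrite !mxE => <-; apply: eq_bigr => r _.
by rewrite -scalerAl linearZ !mxE.
Qed.

Lemma left_mul_mx_delta i j : exists x, left_mul_mx x = delta_mx i j.
Proof.
have [y ydelta] := corner_pairing_onto (delta_mx 0 j).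
exists (b`_i * y); apply/matrixP => i' k; rewrite !mxE.
have -> : b`_i * y * b`_k = b`_i * (e * (y * b`_k) * e).
  by rewrite !mulrA (eR (vbasis_nth_mem i)) -[RHS]mulrA (eR (vbasis_nth_mem k)).
rewrite emue -scalerAr (eR (vbasis_nth_mem i)) linearZ /= coord_free ?vbasis_free //.
by rewrite ydelta mxE eqxx -natrM mulnb andbC eq_sym.
Qed.

Lemma left_mul_mx_onto M : exists x, left_mul_mx x = M.
Proof.
pose f := linear_of left_mul_mx_is_linear.
have onto_sum (I : finType) (G : I -> 'M[F]_(\dim L)) :
    (forall i, exists x, f x = G i) -> exists x, f x = \sum_i G i.
  move=> ontoG; apply: (big_ind (fun N => exists x, f x = N)) => [|_ _ [x <-] [y <-]|i _].
  - by exists 0; rewrite linear0.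
  - by exists (x + y); rewrite linearD.
  - exact: ontoG.
rewrite [M]matrix_sum_delta; apply: (onto_sum) => i; apply: (onto_sum) => j.
have [x xdelta] := left_mul_mx_delta i j.
by exists (M i j *: x); rewrite linearZ /= xdelta.
Qed.

End Corner.
End MinimalLeftIdeal.

Theorem simple_falg_matrix_iso : exists m (f : A -> 'M[F]_m),
  [/\ linear f, bijective f, {morph f : x y / x * y >-> x *m y} & f 1 = 1%:M].
Proof.
have [L [idealL L0 minL]] := exists_minimal_left_ideal.
have [e [eL e0 eR]] := minimal_left_ideal_right_unit idealL L0 minL.
have [mu emue] := corner_scalar idealL L0 minL eL e0 eR.
exists (\dim L), (left_mul_mx L); split.
- exact: left_mul_mx_is_linear.
- apply: injective_onto_bijective; first exact: left_mul_mx_inj.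
  exact: (left_mul_mx_onto e0 eR emue).
- exact: (left_mul_mxM idealL).
- exact: left_mul_mx1.
Qed.

End Wedderburn.

Lemma simple_falg_iso (F : closedFieldType) (A1 A2 : falgType F) :
  simple_ring A1 -> simple_ring A2 -> dim A1 = dim A2 ->
  exists psi : A1 -> A2, [/\ linear psi, bijective psi,
    (forall a b, psi (a * b) = psi a * psi b) & psi 1 = 1].
Proof.
move=> simple1 simple2 dim12.
have [m1 [f1 [lin1 bij1 M1 one1]]] := simple_falg_matrix_iso simple1.
have [m2 [f2 [lin2 bij2 M2 one2]]] := simple_falg_matrix_iso simple2.
have m12 : m1 = m2.
  have := dim_linear_bij lin1 bij1; have := dim_linear_bij lin2 bij2.
  rewrite !dim_matrix dim12 => -> /eqP sq; apply/eqP.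
  by rewrite -(@eqn_exp2r _ _ 2) // -!mulnn eq_sym; exact: sq.
subst m2; case: bij2 => g2 f2K g2K.
exists (g2 \o f1); split.
- by move=> c x y /=; rewrite lin1 (linear_inverse lin2 f2K g2K).
- exact: bij_comp (Bijective g2K f2K) bij1.
- by move=> a b /=; apply: (can_inj f2K); rewrite M2 !g2K M1.
- by apply: (can_inj f2K); rewrite /= g2K one1 one2.
Qed.

Section NearEqDifferentiable.
Variables (R : numFieldType) (V W : normedModType R).

Lemma differentiable_near0 (h : V -> W) x :
  (\forall y \near x, h y = 0) -> differentiable h x.
Proof.
move=> h0; have hx0 : h x = 0 := nbhs_singleton h0.
have hlin : h \o shift x = cst (h x) + (\0 : V -> W) +o_ 0 id.
  rewrite hx0 addr0; apply/eqaddoP => eps eps0.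
  move: h0; rewrite (near_shift 0) subr0; apply: filterS => y /= hy.
  by rewrite /= !fctE hy subrr normr0 mulr_ge0 // ltW.
have d0 : ('d h x : V -> W) = 0 by apply/diff_unique => //; exact: cst_continuous.
by apply/diff_locallyP; rewrite d0; split=> //; exact: cst_continuous.
Qed.

Lemma near_eq_differentiable (f g : V -> W) x :
  (\forall y \near x, f y = g y) -> differentiable f x -> differentiable g x.
Proof.
move=> fg df; have -> : g = f + (g - f) by apply/funext => y /=; rewrite addrC subrK.
apply: differentiableD => //; apply: differentiable_near0.
by apply: filterS fg => y fgy; rewrite !fctE fgy subrr.
Qed.

End NearEqDifferentiable.

Section SmoothClosure.
Variables (n : nat) (U : set 'rV[RR]_n).
Hypothesis openU : open U.
Implicit Types (f g : 'rV[RR]_n -> RR) (h : 'rV[RR]_n -> CC).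

Lemma near_eq_in f g x : (forall x, U x -> f x = g x) -> U x ->
  \forall y \near x, f y = g y.
Proof.
by move=> fg Ux; apply: filterS (fun y => fg y) (open_nbhs_nbhs (conj openU Ux)).
Qed.

Lemma eq_in_Ck k f g : (forall x, U x -> f x = g x) -> Ck k U f -> Ck k U g.
Proof.
elim: k f g => [|k IH] f g fg /=.
  move=> cf x Ux; rewrite /prop_for /continuous_at -(fg x Ux).
  exact: cvg_trans (near_eq_cvg (near_eq_in fg Ux)) (cf x Ux).
case=> df dDf; split=> [x Ux | v].
  exact: (@near_eq_differentiable _ _ RR^o f g x (near_eq_in fg Ux) (df x Ux)).
apply: IH (dDf v) => x Ux.
exact: (@near_eq_derive _ _ RR^o f g x v (near_eq_in fg Ux)).
Qed.

Lemma CkD k f g : Ck k U f -> Ck k U g -> Ck k U (fun x => f x + g x).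
Proof.
elim: k f g => [|k IH] f g /=.
  move=> cf cg x Ux.
  exact: (@cvgD _ _ _ _ _ (f : _ -> RR^o) (g : _ -> RR^o) _ _ (cf x Ux) (cg x Ux)).
case=> df dDf [dg dDg]; split=> [x Ux | v].
  exact: (@differentiableD _ _ _ (f : _ -> RR^o) (g : _ -> RR^o) x
            (df x Ux) (dg x Ux)).
apply: eq_in_Ck (IH _ _ (dDf v) (dDg v)) => x Ux.
rewrite (@deriveD _ _ _ (f : _ -> RR^o) (g : _ -> RR^o)) //.
  exact: diff_derivable (df x Ux).
exact: diff_derivable (dg x Ux).
Qed.

Lemma CkZ k (r : RR) f : Ck k U f -> Ck k U (fun x => r * f x).
Proof.
elim: k f => [|k IH] f /=.
  by move=> cf x Ux; apply: (@cvgZl_tmp _ _ _ _ _ r (f : _ -> RR^o) _ (cf x Ux)).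
case=> df dDf; split=> [x Ux | v].
  exact: (@differentiableZ _ _ _ (f : _ -> RR^o) r x (df x Ux)).
apply: eq_in_Ck (IH _ (dDf v)) => x Ux.
by rewrite (@deriveZ _ _ _ (f : _ -> RR^o)) //; apply: diff_derivable (df x Ux).
Qed.

Lemma Ck_cst k (c : RR) : Ck k U (fun _ => c).
Proof.
elim: k c => [|k IH] c /=; first by move=> x _; apply: cst_continuous.
split=> [x _ | v]; first exact: (@differentiable_cst _ _ _ (c : RR^o)).
by apply: eq_in_Ck (IH 0) => x _; rewrite (@derive_cst _ _ _ (c : RR^o)).
Qed.

Lemma csmoothD h1 h2 :
  csmooth U h1 -> csmooth U h2 -> csmooth U (fun x => h1 x + h2 x).
Proof.
case=> [re1 im1] [re2 im2]; split=> k.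
- by apply: eq_in_Ck (CkD (re1 k) (re2 k)) => x _; case: (h1 x) (h2 x) => ? ? [].
- by apply: eq_in_Ck (CkD (im1 k) (im2 k)) => x _; case: (h1 x) (h2 x) => ? ? [].
Qed.

Lemma csmoothMr h c : csmooth U h -> csmooth U (fun x => h x * c).
Proof.
case: c => a b [re im]; split=> k.
- apply: eq_in_Ck (CkD (CkZ a (re k)) (CkZ (- b) (im k))) => x _.
  by case: (h x) => p q /=; ring.
- apply: eq_in_Ck (CkD (CkZ b (re k)) (CkZ a (im k))) => x _.
  by case: (h x) => p q /=; ring.
Qed.

Lemma csmooth_cst c : csmooth U (fun=> c).
Proof. by split=> k; apply: Ck_cst. Qed.

Lemma csmooth_sum (I : Type) (r : seq I) (h : I -> 'rV[RR]_n -> CC) :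
  (forall i, csmooth U (h i)) -> csmooth U (fun x => \sum_(i <- r) h i x).
Proof.
move=> smooth_h; elim: r => [|i r IH].
  by under [fun x => _]funext => x do rewrite big_nil; apply: csmooth_cst.
by under [fun x => _]funext => x do rewrite big_cons; apply: csmoothD.
Qed.

End SmoothClosure.

Lemma plotA_linear (A1 A2 : falgType CC) (psi : A1 -> A2) n (U : set 'rV[RR]_n) q :
  linear psi -> plotA U q -> plotA U (psi \o q).
Proof.
move=> lin_psi [openU smooth_q]; split=> // j.
pose psiL := linear_of lin_psi; pose B1 := vbasis (fullv : {vspace A1}).
have coord_psi u : coord (vbasis fullv) j (psiL (q u)) =
    \sum_i coord B1 i (q u) * coord (vbasis fullv) j (psiL B1`_i).
  rewrite {1}(coord_vbasis (memvf (q u))) !linear_sum.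
  by apply: eq_bigr => i _; rewrite !linearZ /= mulrC.
under [fun u => _]funext => u do rewrite /= coord_psi.
by apply: csmooth_sum => // i; apply: csmoothMr.
Qed.

Lemma alg_iso_simple (A : falgType CC) (B : algType CC) (f : A -> B) :
  alg_iso f -> simple_algebra B -> simple_ring A.
Proof.
case=> lin_f bij_f fM _ [_ simpleB]; apply: simple_ring_iso bij_f _ fM simpleB.
exact: linearB (linear_of lin_f).
Qed.

Lemma alg_iso_comp (A0 A : falgType CC) (B : algType CC) (psi : A0 -> A) (f : A -> B) :
  alg_iso psi -> alg_iso f -> alg_iso (f \o psi).
Proof.
case=> lin_psi bij_psi psiM psi1 [lin_f bij_f fM f1]; split.
- by move=> c x y /=; rewrite lin_psi lin_f.
- exact: bij_comp.
- by move=> a b /=; rewrite psiM fM.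
- by rewrite /= psi1 f1.
Qed.

Lemma triv_over_precomp (X : Type) (Efib : X -> algType CC)
    (DE : diffeology {x : X & Efib x}) (A0 A : falgType CC) (psi : A0 -> A)
    n (c : 'rV[RR]_n -> X) (V : set 'rV[RR]_n) (Phi : forall w, A -> Efib (c w)) :
  alg_iso psi ->
  triv_over DE (@plotA A) (fun y (f : A -> Efib y) => alg_iso f) c V Phi ->
  triv_over DE (@plotA A0) (fun y (f : A0 -> Efib y) => alg_iso f) c V
    (fun w a => Phi w (psi a)).
Proof.
move=> iso_psi; have [lin_psi [psi' psiK psi'K] _ _] := iso_psi.
case=> iso_Phi smooth_Phi smooth_inv; split.
- by move=> w Vw; apply: alg_iso_comp iso_psi (iso_Phi w Vw).
- by move=> m U p q openU smooth_p pV /(plotA_linear lin_psi); apply: smooth_Phi.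
- move=> m U p b openU smooth_p pV plot_b cpb.
  have [q [plot_q qb]] := smooth_inv m U p b openU smooth_p pV plot_b cpb.
  exists (psi' \o q); split.
    exact: plotA_linear (linear_inverse lin_psi psiK psi'K) plot_q.
  by move=> u Uu /=; rewrite psi'K; apply: qb.
Qed.

Lemma local_model_simple_dim (X : Type) (DX : diffeology X) (Efib : X -> algType CC)
    (DE : diffeology {x : X & Efib x}) (k : nat) n (U : set 'rV[RR]_n)
    (c : 'rV[RR]_n -> X) x (A : falgType CC) (V : set 'rV[RR]_n)
    (Phi : forall w, A -> Efib (c w)) :
  @vector_bundle X DX (fun x => (Efib x : lmodType CC)) DE k ->
  (forall x, simple_algebra (Efib x)) ->
  plot DX U c -> U x -> V x ->
  triv_over DE (@plotA A) (fun y (f : A -> Efib y) => alg_iso f) c V Phi ->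
  simple_ring A /\ dim A = k.
Proof.
move=> [_ vb] simpleE plot_c Ux Vx [iso_Phi _ _].
have iso_x := iso_Phi x Vx.
split; first exact: alg_iso_simple iso_x (simpleE (c x)).
have [W [Psi [_ Wx _ [lin_bij_Psi _ _]]]] := vb n U c plot_c x Ux.
have [lin_Psi bij_Psi] := lin_bij_Psi x Wx.
have [lin_Phi [Phi' PhiK Phi'K] _ _] := iso_x.
have <- : dim 'rV[CC]_k = k by rewrite dim_matrix mul1r.
apply/esym/(dim_linear_bij (f := Phi' \o Psi x)).
- by move=> a u v /=; rewrite lin_Psi (linear_inverse lin_Phi PhiK Phi'K).
- exact: bij_comp (Bijective Phi'K PhiK) bij_Psi.
Qed.

Theorem lemmaA6 (X : Type) (DX : diffeology X) (Efib : X -> algType CC)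
  (DE : diffeology {x : X & Efib x}) (k : nat)
  (Hvb : @vector_bundle X DX (fun x => (Efib x : lmodType CC)) DE k)
  (Hloc : local_algebra_structure DX DE)
  (Hsimple : forall x : X, simple_algebra (Efib x)) :
  algebra_bundle DX DE.
Proof.
have [algE localE] := Hloc; split=> //.
have model := local_model_simple_dim Hvb Hsimple.
have [[x0] | noX] := pselect (inhabited X); last first.
  by exists 'M[CC]_1 => n U c _ x _; case: noX; constructor; exact: c x.
have plot0 := @plot_const _ DX 0 setT x0 openT.
have [A0 [V0 [Phi0 [_ V00 _ triv0]]]] := localE 0 setT _ plot0 0 I.
have [simpleA0 dimA0] := model _ _ _ _ _ _ _ plot0 I V00 triv0.
exists A0 => n U c plot_c x Ux.
have [A [V [Phi [openV Vx VU triv]]]] := localE n U c plot_c x Ux.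
have [simpleA dimA] := model _ _ _ _ _ _ _ plot_c Ux Vx triv.
have [psi iso_psi] := simple_falg_iso simpleA0 simpleA (etrans dimA0 (esym dimA)).
by exists V, (fun w a => Phi w (psi a)); split=> //; apply: triv_over_precomp.
Qed.
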